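(* Every binary orchard network is tree-based.
   Context: A (directed phylogenetic) network on a finite taxa set $X$ is a directed acyclic graph without parallel arcs whose nodes are of the following types: a unique root (indegree 0, outdegree 1); tree nodes (indegree 1, outdegree at least 2); reticulations (indegree at least 2, outdegree 1); leaves (indegree 1, outdegree 0), the leaves being bijectively labelled by $X$. A network is binary if every tree node and every reticulation has total degree (indegree plus outdegree) exactly 3. A tree is a network without reticulations. Orchard networks: An ordered pair of leaves $(x,y)$ is a cherry if $x$ and $y$ have a common parent; it is a reticulated cherry if the parent $p_x$ of $x$ is a reticulation and $p_x$ and $y$ have a common parent. Let $p_x,p_y$ be the parents of $x,y$. Reducing $(x,y)$ in a network $N$: if $(x,y)$ is a cherry, delete $x$ and suppress $p_x$ if it now has indegree 1 and outdegree 1; if $(x,y)$ is a reticulated cherry, delete the arc $(p_y,p_x)$ and suppress any resulting node of indegree 1 and outdegree 1; otherwise do nothing. (Suppressing a node $v$ with one parent $u$ and one child $w$ means deleting $v$ and adding the arc $(u,w)$.) For a sequence $S$ of ordered pairs, $NS$ denotes the result of reducing the pairs of $S$ in order. $N$ is orchard if there is a sequence $S$ such that $NS$ is a tree with exactly one leaf. Tree-based: A binary network $N$ is tree-based with base tree $T$ (a binary tree on the same taxa) if $N$ can be obtained from $T$ by: (i) replacing some arcs of $T$ by directed paths whose internal nodes (attachment points) have indegree 1 and outdegree 1; (ii) adding arcs (linking arcs) between attachment points so that no node has total degree greater than 3 and the graph stays acyclic; (iii) suppressing all attachment points not incident to a linking arc. *)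

From mathcomp Require Import all_boot.
From mathcomp Require Import finmap.
Set Implicit Arguments. Unset Strict Implicit. Unset Printing Implicit Defensive.
Local Open Scope fset_scope.

(* A finite directed graph: nodes are natural numbers, arcs a finite set of
   ordered pairs (so there are never parallel arcs). *)
Record dgraph := DGraph { verts : {fset nat}; arcs : {fset (nat * nat)} }.

Definition in_arcs (G : dgraph) (v : nat) := [fset a in arcs G | a.2 == v].
Definition out_arcs (G : dgraph) (v : nat) := [fset a in arcs G | a.1 == v].
Definition indeg G v := #|` in_arcs G v|.
Definition outdeg G v := #|` out_arcs G v|.
Definition parents G v : {fset nat} := [fset a.1 | a in in_arcs G v].
Definition children G v : {fset nat} := [fset a.2 | a in out_arcs G v].

Inductive reach (G : dgraph) : nat -> nat -> Prop :=
| reach_arc u v : (u, v) \in arcs G -> reach G u v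
| reach_trans u v w : reach G u v -> reach G v w -> reach G u w.

Definition acyclic G := forall v, ~ reach G v v.

Definition is_rootb G v := (v \in verts G) && (indeg G v == 0) && (outdeg G v == 1).
Definition is_treenodeb G v := (v \in verts G) && (indeg G v == 1) && (1 < outdeg G v)%N.
Definition is_reticb G v := (v \in verts G) && (1 < indeg G v)%N && (outdeg G v == 1).
Definition is_leafb G v := (v \in verts G) && (indeg G v == 1) && (outdeg G v == 0).

Definition is_dnet (G : dgraph) : Prop :=
  (forall a, a \in arcs G -> (a.1 \in verts G) /\ (a.2 \in verts G)) /\
  acyclic G /\
  (exists r, is_rootb G r /\ forall v, v \in verts G -> indeg G v = 0 -> v = r) /\
  (forall v, v \in verts G ->
     [|| is_rootb G v, is_treenodeb G v, is_reticb G v | is_leafb G v]).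

Definition is_network (X : finType) (G : dgraph) (lbl : X -> nat) : Prop :=
  is_dnet G /\ injective lbl /\ (forall x, is_leafb G (lbl x)) /\
  (forall v, is_leafb G v -> exists x, lbl x = v).

Definition is_binary (G : dgraph) : Prop :=
  forall v, (is_treenodeb G v || is_reticb G v) -> (indeg G v + outdeg G v)%N = 3%N.

Definition no_retic (G : dgraph) : Prop := forall v, ~~ is_reticb G v.

Definition binary_network (X : finType) G (lbl : X -> nat) :=
  is_network G lbl /\ is_binary G.
Definition binary_tree (X : finType) G (lbl : X -> nat) :=
  binary_network G lbl /\ no_retic G.

(* the (first) parent of v; for a leaf this is its unique parent *)
Definition par G v : nat := head 0%N (enum_fset (parents G v)).
Definition chld G v : nat := head 0%N (enum_fset (children G v)).

Definition suppress (G : dgraph) (v : nat) : dgraph :=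
  if (indeg G v == 1) && (outdeg G v == 1) then
    let u := par G v in let w := chld G v in
    DGraph (verts G `\ v) (((arcs G `\ (u, v)) `\ (v, w)) `|` [fset (u, w)])
  else G.

Definition del_vertex (G : dgraph) (x : nat) : dgraph :=
  DGraph (verts G `\ x) [fset a in arcs G | (a.1 != x) && (a.2 != x)].

Definition del_arc (G : dgraph) (a : nat * nat) : dgraph :=
  DGraph (verts G) (arcs G `\ a).

Definition cherryb G x y :=
  [&& is_leafb G x, is_leafb G y, x != y & par G x == par G y].
Definition ret_cherryb G x y :=
  [&& is_leafb G x, is_leafb G y, x != y, is_reticb G (par G x)
    & (par G y, par G x) \in arcs G].

Definition reduce_pair (G : dgraph) (x y : nat) : dgraph :=
  if cherryb G x y then suppress (del_vertex G x) (par G x)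
  else if ret_cherryb G x y then
    suppress (suppress (del_arc G (par G y, par G x)) (par G x)) (par G y)
  else G.

Definition reduce_seq (G : dgraph) (S : seq (nat * nat)) : dgraph :=
  foldl (fun H p => reduce_pair H p.1 p.2) G S.

Definition nb_leaves G := #|` [fset v in verts G | is_leafb G v]|.

Definition orchard (X : finType) (G : dgraph) (lbl : X -> nat) : Prop :=
  exists S : seq (X * X),
    let H := reduce_seq G [seq (lbl p.1, lbl p.2) | p <- S] in
    is_dnet H /\ no_retic H /\ nb_leaves H = 1%N.

(* S is obtained from T by replacing arcs by directed paths (iterated
   subdivision of arcs with fresh nodes) *)
Inductive subdivision (T : dgraph) : dgraph -> Prop :=
| subdiv_refl : subdivision T T
| subdiv_step S u v w : subdivision T S -> (u, v) \in arcs S -> w \notin verts S ->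
    subdivision T (DGraph (w |` verts S)
                          ((arcs S `\ (u, v)) `|` [fset (u, w); (w, v)])).

Definition lab_iso (X : finType) (G1 : dgraph) (l1 : X -> nat)
    (G2 : dgraph) (l2 : X -> nat) : Prop :=
  exists f : nat -> nat,
    {in verts G1 &, injective f} /\
    [fset f v | v in verts G1] = verts G2 /\
    (forall u v, u \in verts G1 -> v \in verts G1 ->
       ((u, v) \in arcs G1) = ((f u, f v) \in arcs G2)) /\
    (forall x, f (l1 x) = l2 x).

Definition tree_based (X : finType) (N : dgraph) (lbl : X -> nat) : Prop :=
  exists (T : dgraph) (lT : X -> nat), binary_tree T lT /\
  exists (S : dgraph) (L : {fset nat * nat}),
    subdivision T S /\
    let att := verts S `\` verts T in
    (forall a, a \in L -> (a.1 \in att) /\ (a.2 \in att) /\ (a \notin arcs S)) /\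
    let H := DGraph (verts S) (arcs S `|` L) in
    (forall v, (indeg H v + outdeg H v <= 3)%N) /\ acyclic H /\
    let unused := [fset v in att | ~~ [exists a : L, ((val a).1 == v) || ((val a).2 == v)]] in
    lab_iso (foldl suppress H (enum_fset unused)) lT N lbl.

From mathcomp Require Import all_boot finmap zify.
Set Implicit Arguments. Unset Strict Implicit. Unset Printing Implicit Defensive.
Local Open Scope fset_scope.
Local Open Scope nat_scope.

(* Call a set E of arcs linking if it contains exactly one incoming
   arc of each reticulation and never all outgoing arcs of a node. Deleting E
   leaves every node with indegree at most one and every tree node with a
   child, so suppressing the nodes of in- and outdegree one yields a binary
   base tree whose linking arcs are E. A tree has the empty linking set, and
   linking sets lift backwards along the reductions: a cherry reduction only
   removes a leaf and its parent, so the set lifts unchanged, whereas a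
   reticulated-cherry reduction deletes the arc (p_y, p_x), which is added. *)

Section FiniteCount.
Variable T : choiceType.
Implicit Types (A B : {fset T}) (P : pred T).

Definition fcount A P := #|` [fset a in A | P a]|.

Lemma fcountD1 A P c : c \in A -> fcount (A `\ c) P + P c = fcount A P.
Proof.
move=> cA; rewrite /fcount [RHS](cardfsD1 c) !inE cA /= addnC.
congr (_ + #|` _|); apply/fsetP=> a; rewrite !inE.
by case: eqVneq.
Qed.

Lemma fcountU1 A P b : b \notin A -> fcount (A `|` [fset b]) P = fcount A P + P b.
Proof.
move=> bA; rewrite -(fcountD1 P (_ : b \in A `|` [fset b])); last by rewrite !inE eqxx orbT.
congr (fcount _ _ + _); apply/fsetP=> a; rewrite !inE.
by case: eqVneq => [->|]; rewrite ?(negbTE bA) ?orbF.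
Qed.

Lemma fcount_split A B P : B `<=` A -> fcount A P = fcount (A `\` B) P + fcount B P.
Proof.
move=> BA; rewrite /fcount.
have -> : [fset a in A `\` B | P a] = [fset a in A | P a] `\` [fset a in B | P a].
  by apply/fsetP=> a; rewrite !inE; case: (a \in B); case: (P a); rewrite ?andbF.
have sub : [fset a in B | P a] `<=` [fset a in A | P a].
  by apply/fsubsetP=> a; rewrite !inE => /andP[/(fsubsetP BA) -> ->].
by rewrite cardfsDS // subnK // fsubset_leq_card.
Qed.

Lemma fcount_gt0P A P : reflect (exists2 a, a \in A & P a) (0 < fcount A P).
Proof.
rewrite /fcount cardfs_gt0; apply: (iffP (fset0Pn _)) => [[a]|[a aA Pa]].
  by rewrite !inE => /andP[]; exists a.
by exists a; rewrite !inE aA.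
Qed.

Lemma fcount_eq0 A P : (forall a, a \in A -> ~~ P a) -> fcount A P = 0.
Proof.
move=> nP; apply/eqP; rewrite eqn0Ngt; apply/fcount_gt0P => -[a /nP /negP]; exact.
Qed.

Lemma fcount1_eq A P a b : fcount A P = 1 -> a \in A -> P a -> b \in A -> P b -> a = b.
Proof.
move=> /eqP/cardfs1P[c Ec] aA Pa bA Pb.
have : a \in [fset a in A | P a] by rewrite !inE aA.
have : b \in [fset a in A | P a] by rewrite !inE bA.
by rewrite Ec !inE => /eqP-> /eqP->.
Qed.

Lemma fcount_ge2 A P a1 a2 :
  a1 \in A -> P a1 -> a2 \in A -> P a2 -> a1 != a2 -> (2 <= fcount A P).
Proof.
move=> a1A Pa1 a2A Pa2 a12; rewrite -(fcountD1 P a1A) Pa1 addn1 ltnS.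
by apply/fcount_gt0P; exists a2; rewrite // !inE eq_sym a12.
Qed.

Lemma fcount1 b P : fcount [fset b] P = P b.
Proof. by rewrite -[[fset b]]fset0U fcountU1 // (@fcount_eq0 fset0) // => a; rewrite inE. Qed.

Lemma fcountU A B P : (forall b, b \in B -> b \notin A) ->
  fcount (A `|` B) P = fcount A P + fcount B P.
Proof.
move=> AB; rewrite (@fcount_split _ B) ?fsubsetUr //; congr (fcount _ _ + _).
apply/fsetP => a; rewrite !inE.
by case: (boolP (a \in B)) => [/AB /negbTE ->|] /=; rewrite ?orbF ?andbT.
Qed.

End FiniteCount.

Lemma head_fset1 (T : choiceType) (y x : T) : head y (enum_fset [fset x]) = x.
Proof.
have : x \in enum_fset [fset x] by rewrite -[_ \in _]/(x \in [fset x]) inE.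
case E: (enum_fset [fset x]) => [|h t] //= _.
have : h \in [fset x] by rewrite -[h \in _]/(h \in enum_fset _) E mem_head.
by rewrite inE => /eqP.
Qed.

Lemma dgraph_eta G : G = DGraph (verts G) (arcs G).
Proof. by case: G. Qed.

Definition arcs_closed G := forall a, a \in arcs G -> (a.1 \in verts G) /\ (a.2 \in verts G).

Section ArcDegrees.
Variable G : dgraph.

Lemma indegE v : indeg G v = fcount (arcs G) (fun a => a.2 == v). Proof. by []. Qed.
Lemma outdegE v : outdeg G v = fcount (arcs G) (fun a => a.1 == v). Proof. by []. Qed.

Lemma indeg1_arc u v a :
  indeg G v = 1 -> (u, v) \in arcs G -> a \in arcs G -> a.2 = v -> a = (u, v).
Proof. by move=> v1 uv aG av; apply: (fcount1_eq v1) => //=; rewrite av. Qed.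

Lemma outdeg1_arc v w a :
  outdeg G v = 1 -> (v, w) \in arcs G -> a \in arcs G -> a.1 = v -> a = (v, w).
Proof. by move=> v1 vw aG av; apply: (fcount1_eq v1) => //=; rewrite av. Qed.

Lemma outdeg0_arc v w : outdeg G v = 0 -> (v, w) \notin arcs G.
Proof.
move=> v0; apply/negP => vw; suff: 0 < outdeg G v by rewrite v0.
by apply/fcount_gt0P; exists (v, w).
Qed.

Lemma parents1 u v : indeg G v = 1 -> (u, v) \in arcs G -> parents G v = [fset u].
Proof.
move=> v1 uv; apply/fsetP => z; rewrite inE; apply/imfsetP/eqP => [[a]|->].
  by rewrite !inE /= => /andP[aG /eqP av] ->; rewrite (indeg1_arc v1 uv aG av).
by exists (u, v); rewrite // !inE uv /=.
Qed.

Lemma children1 v w : outdeg G v = 1 -> (v, w) \in arcs G -> children G v = [fset w].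
Proof.
move=> v1 vw; apply/fsetP => z; rewrite inE; apply/imfsetP/eqP => [[a]|->].
  by rewrite !inE /= => /andP[aG /eqP av] ->; rewrite (outdeg1_arc v1 vw aG av).
by exists (v, w); rewrite // !inE vw /=.
Qed.

Lemma par_eq u v : indeg G v = 1 -> (u, v) \in arcs G -> par G v = u.
Proof. by move=> v1 uv; rewrite /par (parents1 v1 uv) head_fset1. Qed.

Lemma chld_eq v w : outdeg G v = 1 -> (v, w) \in arcs G -> chld G v = w.
Proof. by move=> v1 vw; rewrite /chld (children1 v1 vw) head_fset1. Qed.

Lemma par_arc v : indeg G v = 1 -> (par G v, v) \in arcs G.
Proof.
move=> v1; have /fcount_gt0P[[u v'] uv /= /eqP ev] : (0 < indeg G v) by rewrite v1.
by rewrite ev in uv; rewrite (par_eq v1 uv).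
Qed.

Lemma chld_arc v : outdeg G v = 1 -> (v, chld G v) \in arcs G.
Proof.
move=> v1; have /fcount_gt0P[[v' w] vw /= /eqP ev] : (0 < outdeg G v) by rewrite v1.
by rewrite ev in vw; rewrite (chld_eq v1 vw).
Qed.

Lemma arc_neq u v : acyclic G -> (u, v) \in arcs G -> u != v.
Proof.
by move=> acG uv; apply/eqP => eq_uv; apply: (acG u); rewrite {2}eq_uv; apply: reach_arc.
Qed.

Lemma leafP x : is_leafb G x -> [/\ x \in verts G, indeg G x = 1 & outdeg G x = 0].
Proof. by case/andP=> /andP[-> /eqP ->] /eqP ->. Qed.

Lemma reticP x : is_reticb G x -> [/\ x \in verts G, (1 < indeg G x) & outdeg G x = 1].
Proof. by case/andP=> /andP[-> ->] /eqP ->. Qed.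

End ArcDegrees.

Lemma closed_deg0 G z : arcs_closed G -> z \notin verts G -> indeg G z = 0 /\ outdeg G z = 0.
Proof.
move=> clG zG; split; apply: fcount_eq0 => a /clG[a1 a2];
  by apply: contraNneq zG => <-.
Qed.

Lemma dnet_closed G : is_dnet G -> arcs_closed G.
Proof. by case. Qed.

Lemma dnet_acyclic G : is_dnet G -> acyclic G.
Proof. by case=> _ []. Qed.

Lemma indeg1_retic G v : indeg G v = 1 -> ~~ is_reticb G v.
Proof. by move=> v1; rewrite /is_reticb v1 andbF. Qed.

Lemma del_arc_deg G V a z : a \in arcs G ->
  indeg (DGraph V (arcs G `\ a)) z + (a.2 == z) = indeg G z /\
  outdeg (DGraph V (arcs G `\ a)) z + (a.1 == z) = outdeg G z.
Proof. by move=> aG; split; apply: fcountD1. Qed.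

Lemma del_leafE G x : is_leafb G x ->
  del_vertex G x = DGraph (verts G `\ x) (arcs G `\ (par G x, x)).
Proof.
case/leafP => _ x1 x0; congr DGraph; apply/fsetP => -[a1 a2]; rewrite !inE /=.
case: (boolP ((a1, a2) \in arcs G)) => aG; rewrite ?andbF ?andbT //.
have -> : a1 != x by apply: contraTneq aG => ->; exact: outdeg0_arc.
case: (eqVneq a2 x) => [a2x|a2x] /=; last by rewrite xpair_eqE (negbTE a2x) andbF.
by rewrite (indeg1_arc x1 (par_arc x1) aG a2x) eqxx.
Qed.

Lemma reach_sub G H : (forall a, a \in arcs H -> reach G a.1 a.2) ->
  forall u v, reach H u v -> reach G u v.
Proof. by move=> HG u v; elim=> [x y /HG //|x y z _ IH1 _ IH2]; exact: reach_trans IH1 IH2. Qed.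

Lemma binary_degrees G v : is_dnet G -> is_binary G -> v \in verts G ->
  [\/ indeg G v = 0 /\ outdeg G v = 1, indeg G v = 1 /\ outdeg G v = 2,
      indeg G v = 2 /\ outdeg G v = 1 | indeg G v = 1 /\ outdeg G v = 0].
Proof.
move=> [_ [_ [_ types]]] /(_ v) bin vG; move: (types v vG) bin.
rewrite /is_rootb /is_treenodeb /is_reticb /is_leafb vG /=.
case/or4P => [/andP[/eqP -> /eqP ->]|/andP[/eqP i1 o2]|/andP[i2 /eqP o1]|/andP[/eqP -> /eqP ->]]
  bin.
- by constructor 1.
- by constructor 2; move: bin; rewrite i1 o2 => /(_ isT); lia.
- by constructor 3; move: bin; rewrite i2 o1 orbT => /(_ isT); lia.
- by constructor 4.
Qed.

Section Suppress.
Variables (G : dgraph) (u v w : nat).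
Hypotheses (v_in1 : indeg G v = 1) (v_out1 : outdeg G v = 1).
Hypotheses (uv : (u, v) \in arcs G) (vw : (v, w) \in arcs G) (uw : (u, w) \notin arcs G).

Lemma suppressE :
  suppress G v = DGraph (verts G `\ v) (((arcs G `\ (u, v)) `\ (v, w)) `|` [fset (u, w)]).
Proof. by rewrite /suppress v_in1 v_out1 /= (par_eq v_in1 uv) (chld_eq v_out1 vw). Qed.

Lemma suppress_neq : (u != v) && (v != w).
Proof.
apply/andP; split; apply/eqP => eqv; move/negP: uw; apply.
  have vv : (v, v) \in arcs G by rewrite -{1}eqv.
  by have [<-] := outdeg1_arc v_out1 vw vv erefl; rewrite eqv.
have vv : (v, v) \in arcs G by rewrite {2}eqv.
by have [<-] := indeg1_arc v_in1 uv vv erefl.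
Qed.

Lemma in_suppress_verts z : (z \in verts (suppress G v)) = (z != v) && (z \in verts G).
Proof. by rewrite suppressE !inE. Qed.

Lemma in_suppress_arcs a :
  (a \in arcs (suppress G v)) = (a == (u, w)) || [&& a != (v, w), a != (u, v) & a \in arcs G].
Proof. by rewrite suppressE /= !inE orbC. Qed.

Lemma suppress_fcount P :
  fcount (arcs (suppress G v)) P + P (u, v) + P (v, w) = fcount (arcs G) P + P (u, w).
Proof.
have /andP[uv' vw'] := suppress_neq.
have vw1 : (v, w) \in arcs G `\ (u, v) by rewrite !inE vw andbT; apply: contra uv' => /eqP[->].
rewrite suppressE fcountU1; last by rewrite !inE (negbTE uw) !andbF.
by rewrite -(fcountD1 P uv) -(fcountD1 P vw1); lia.
Qed.

Lemma suppress_deg z : z != v ->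
  indeg (suppress G v) z = indeg G z /\ outdeg (suppress G v) z = outdeg G z.
Proof.
move=> /negbTE zv; have := suppress_fcount (fun a => a.2 == z).
have := suppress_fcount (fun a => a.1 == z); rewrite /= !(eq_sym _ z) zv.
by rewrite -!indegE -!outdegE; lia.
Qed.

Lemma suppress_closed : arcs_closed G -> arcs_closed (suppress G v).
Proof.
move=> clG [a1 a2]; rewrite in_suppress_arcs => /orP[/eqP[-> ->]|/and3P[n1 n2 aG]].
  have /andP[uv' vw'] := suppress_neq.
  by rewrite !in_suppress_verts uv' eq_sym vw' (clG _ uv).1 (clG _ vw).2.
rewrite !in_suppress_verts (clG _ aG).1 (clG _ aG).2 !andbT /=.
by split; [apply: contra n1 | apply: contra n2] => /eqP av;
  [rewrite (outdeg1_arc v_out1 vw aG av) | rewrite (indeg1_arc v_in1 uv aG av)].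
Qed.

Lemma suppress_reach a : a \in arcs (suppress G v) -> reach G a.1 a.2.
Proof.
case: a => a1 a2; rewrite in_suppress_arcs => /orP[/eqP[-> ->] | /and3P[_ _ aG]].
  exact: reach_trans (reach_arc uv) (reach_arc vw).
exact: reach_arc.
Qed.

Lemma suppress_subdivision : v \in verts G -> subdivision (suppress G v) G.
Proof.
move=> vG; have /andP[uv' vw'] := suppress_neq.
have EG : G = DGraph (v |` verts (suppress G v))
    ((arcs (suppress G v) `\ (u, w)) `|` [fset (u, v); (v, w)]).
  rewrite {1}[G]dgraph_eta; congr DGraph; apply/fsetP => z; rewrite !inE.
    by rewrite in_suppress_verts; case: eqVneq => // ->.
  rewrite in_suppress_arcs; case: (eqVneq z (u, w)) => [->|_] /=.
    by rewrite (negbTE uw) !xpair_eqE (negbTE uv') [w == v]eq_sym (negbTE vw') !andbF.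
  case: (eqVneq z (u, v)) => [->|_]; first by rewrite uv !orbT.
  by case: (eqVneq z (v, w)) => [->|_]; rewrite ?vw ?andbT ?orbT ?orbF.
rewrite [X in subdivision _ X]EG.
by apply: subdiv_step; rewrite ?in_suppress_arcs ?in_suppress_verts ?eqxx //; apply: subdiv_refl.
Qed.

End Suppress.

Definition linking_arcs (G : dgraph) (E : {fset nat * nat}) :=
  [/\ E `<=` arcs G, (forall a, a \in E -> is_reticb G a.2),
      (forall v, is_reticb G v -> fcount E (fun a => a.2 == v) = 1) &
      (forall a, a \in E -> exists2 w, (a.1, w) \in arcs G & (a.1, w) \notin E)].

Definition shortcut (G G' : dgraph) (F : {fset nat * nat}) (a : nat * nat) :=
  ~~ is_reticb G a.2 /\
  exists2 v, (v \notin verts G') && ((a.1, v) \notin F) &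
             ((a.1, v) \in arcs G) && ((v, a.2) \in arcs G).

Definition degree_restriction (G G' : dgraph) :=
  [/\ verts G' `<=` verts G,
      forall z, z \in verts G' -> indeg G' z = indeg G z /\ outdeg G' z = outdeg G z,
      arcs_closed G' &
      forall v, v \in verts G -> indeg G v = 0 -> v \in verts G'].

Section DegreeRestriction.
Variables G G' : dgraph.
Hypothesis resG : degree_restriction G G'.

Lemma restriction_types z : z \in verts G' ->
  [/\ is_rootb G' z = is_rootb G z, is_treenodeb G' z = is_treenodeb G z,
      is_reticb G' z = is_reticb G z & is_leafb G' z = is_leafb G z].
Proof.
case: resG => sub deg _ _ zG'; have zG := fsubsetP sub z zG'.
by have [i o] := deg z zG'; rewrite /is_rootb /is_treenodeb /is_reticb /is_leafb zG zG' i o.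
Qed.

Lemma restriction_network : is_dnet G -> is_binary G -> acyclic G' -> is_dnet G' /\ is_binary G'.
Proof.
case: resG => sub deg clG' roots [_ [_ [[r [rootr uniqr]] types]]] binG acG'.
split; last first.
  move=> v; case: (boolP (v \in verts G')) => [vG'|vG']; last first.
    by rewrite /is_treenodeb /is_reticb (negbTE vG').
  have [_ -> -> _] := restriction_types vG'; have [-> ->] := deg v vG'; exact: binG.
have rG' : r \in verts G' by case/andP: (rootr) => /andP[rG /eqP r0] _; exact: roots.
do 2!split => //; split; last first.
  by move=> v vG'; have [-> -> -> ->] := restriction_types vG'; exact/types/(fsubsetP sub).
exists r; split; first by have [-> _ _ _] := restriction_types rG'.
by move=> v vG' v0; apply: uniqr; [exact: (fsubsetP sub) | rewrite -(deg v vG').1].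
Qed.

End DegreeRestriction.

(* G' arises from G by deleting nodes, bridging some of them by shortcut arcs,
   and deleting the arcs F into reticulations. *)
Record reduction (G G' : dgraph) (F : {fset nat * nat}) : Prop := Reduction {
  reduction_restriction : degree_restriction G G';
  reduction_arcs : forall a, a \in arcs G' -> a \in arcs G \/ shortcut G G' F a;
  reduction_links : forall a, a \in F ->
    [/\ a \in arcs G, is_reticb G a.2, a.2 \notin verts G' &
        exists2 w, (a.1, w) \in arcs G & ~~ is_reticb G w];
  reduction_retic : forall v, is_reticb G v -> v \notin verts G' ->
    fcount F (fun a => a.2 == v) = 1 }.

Section Reduction.
Variables (G G' : dgraph) (F : {fset nat * nat}).
Hypothesis redG : reduction G G' F.

Lemma reduction_reach a : a \in arcs G' -> reach G a.1 a.2.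
Proof.
case: a => a1 a2; case/(reduction_arcs redG) => [/reach_arc //|[_ [v _ /andP[a1v va2]]]].
exact: reach_trans (reach_arc a1v) (reach_arc va2).
Qed.

Lemma reduction_network : is_dnet G -> is_binary G -> is_dnet G' /\ is_binary G'.
Proof.
move=> netG binG; apply: (restriction_network (reduction_restriction redG) netG binG).
by move=> v /(reach_sub reduction_reach); apply: (dnet_acyclic netG).
Qed.

Lemma reduction_linking_arcs E : linking_arcs G' E -> linking_arcs G (E `|` F).
Proof.
case=> EG' Eretic Ecount Eout; have [_ _ clG' _] := reduction_restriction redG.
have types := restriction_types (reduction_restriction redG).
have Etarget a : a \in E -> a.2 \in verts G' /\ is_reticb G a.2.
  move=> aE; have a2G' := (clG' _ (fsubsetP EG' a aE)).2.
  by have [_ _ <- _] := types _ a2G'; split; last exact: Eretic.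
have EG a : a \in E -> a \in arcs G.
  move=> aE; case: (reduction_arcs redG (fsubsetP EG' a aE)) => // -[nret _].
  by rewrite (Etarget a aE).2 in nret.
have FE a : a \in F -> a \notin E.
  by case/(reduction_links redG) => _ _ a2G' _; apply: contra a2G' => /Etarget[].
split.
- by apply/fsubsetP => a; rewrite inE => /orP[/EG|/(reduction_links redG)[]].
- by move=> a; rewrite inE => /orP[/Etarget[]|/(reduction_links redG)[]].
- move=> v vret; rewrite fcountU //; case: (boolP (v \in verts G')) => vG'.
    rewrite Ecount; last by have [_ _ -> _] := types _ vG'.
    rewrite fcount_eq0 // => a /(reduction_links redG)[_ _ a2G' _].
    by apply: contraNneq a2G' => ->.
  rewrite (reduction_retic redG) // fcount_eq0 // => a /Etarget[a2G' _].
  by apply: contraNneq vG' => <-.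
move=> a; rewrite inE => /orP[aE|aF]; last first.
  have [_ _ _ [w aw wret]] := reduction_links redG aF; exists w => //.
  rewrite inE negb_or; apply/andP; split; first by apply: contra wret => /Etarget[].
  by apply: contra wret => /(reduction_links redG)[].
have [w aw awE] := Eout a aE.
case: (reduction_arcs redG aw) => [awG|[_ [v /andP[vG' avF] /andP[av _]]]].
  exists w; rewrite // inE negb_or awE /=.
  apply: contraT => /negPn/(reduction_links redG)[_ _ /negP wG' _].
  by case: wG'; exact: (clG' _ aw).2.
exists v; rewrite // inE negb_or avF andbT.
by apply: contra vG' => /Etarget[].
Qed.

End Reduction.

Section CherryReduction.
Variables (G : dgraph) (x y : nat).
Hypotheses (netG : is_dnet G) (binG : is_binary G) (cherry : cherryb G x y).

Let p := par G x.
Let u := par G p.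

Lemma cherry_parent :
  [/\ (p, x) \in arcs G, (p, y) \in arcs G, indeg G p = 1 & outdeg G p = 2].
Proof.
case/and4P: cherry => /leafP[_ x1 _] /leafP[_ y1 _] xy /eqP pxy.
have px := par_arc x1; have py : (p, y) \in arcs G by rewrite /p pxy; exact: par_arc.
have o2 : (2 <= outdeg G p).
  by apply: (@fcount_ge2 _ _ _ (p, x) (p, y)) => //=; apply: contra xy => /eqP[->].
by case: (binary_degrees netG binG (dnet_closed netG px).1) o2 => -[-> ->].
Qed.

Lemma cherry_reduction : reduction G (reduce_pair G x y) fset0.
Proof.
have [px py p1 p2] := cherry_parent.
move: (cherry) => /and4P[/leafP[xG x1 x0] /leafP[yG y1 y0] xy _].
have acG := dnet_acyclic netG; have clG := dnet_closed netG.
have up := par_arc p1; have up' := arc_neq acG up; have px' := arc_neq acG px.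
rewrite /reduce_pair cherry del_leafE -/p; last by case/and4P: cherry.
set G1 := DGraph _ _.
have deg1 z : indeg G1 z + (x == z) = indeg G z /\ outdeg G1 z + (p == z) = outdeg G z :=
  del_arc_deg _ z px.
have up1 : (u, p) \in arcs G1 by rewrite !inE up andbT; apply: contra px' => /eqP[_ ->].
have py1 : (p, y) \in arcs G1 by rewrite !inE py andbT; apply: contra xy => /eqP[->].
have pin1 : indeg G1 p = 1 by have := (deg1 p).1; rewrite [x == p]eq_sym (negbTE px') p1; lia.
have pout1 : outdeg G1 p = 1 by have := (deg1 p).2; rewrite eqxx p2; lia.
have uy1 : (u, y) \notin arcs G1.
  rewrite !inE negb_and; apply/orP; right; apply: contra up' => uy.
  by apply/eqP; case: (indeg1_arc y1 py uy erefl).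
have inG2 z : (z \in verts (suppress G1 p)) = [&& z != p, z != x & z \in verts G].
  by rewrite (in_suppress_verts pin1 pout1 up1 py1) !inE.
have arcs1 a : a \in arcs G1 -> a \in arcs G by rewrite !inE => /andP[].
have clG1 : arcs_closed G1.
  move=> [a1 a2] /[dup] /arcs1 aG; rewrite !inE /= (clG _ aG).1 (clG _ aG).2 !andbT.
  case/andP=> a_px _.
  split; first by apply: contraTneq aG => ->; exact: outdeg0_arc.
  by apply: contraNneq a_px => a2x; rewrite (indeg1_arc x1 px aG a2x).
split; first split.
- by apply/fsubsetP => z; rewrite inG2 => /and3P[].
- move=> z; rewrite inG2 => /and3P[zp zx _].
  have [-> ->] := suppress_deg pin1 pout1 up1 py1 uy1 zp.
  by have [] := deg1 z; rewrite /= !(eq_sym _ z) (negbTE zp) (negbTE zx) !addn0.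
- exact: (suppress_closed pin1 pout1 up1 py1 uy1).
- move=> v vG v0; rewrite inG2 vG andbT.
  by apply/andP; split; apply/eqP => ev; move: v0; rewrite ev ?p1 ?x1.
- move=> a; rewrite (in_suppress_arcs pin1 pout1 up1 py1).
  case/orP=> [/eqP->|/and3P[_ _ /arcs1]]; last by left.
  right; split; first by rewrite indeg1_retic.
  by exists p; rewrite ?inG2 ?eqxx ?up ?py.
- by move=> a; rewrite inE.
- move=> v /reticP[vG vin _]; rewrite inG2 vG andbT negb_and !negbK.
  by case/orP => /eqP vpx; move: vin; rewrite vpx ?p1 ?x1.
Qed.

End CherryReduction.

Section RetCherryReduction.
Variables (G : dgraph) (x y : nat).
Hypotheses (netG : is_dnet G) (binG : is_binary G) (ret : ret_cherryb G x y).

Let px := par G x.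
Let py := par G y.
Let q := par G py.

Lemma ret_cherry_shape :
  [/\ is_leafb G x, is_leafb G y, x != y, is_reticb G px & (py, px) \in arcs G].
Proof. exact/and5P. Qed.

Lemma ret_cherry_arcs : [/\ (px, x) \in arcs G, (py, y) \in arcs G & (py, px) \in arcs G].
Proof. by case: ret_cherry_shape => /leafP[_ x1 _] /leafP[_ y1 _] _ _ ->; rewrite !par_arc. Qed.

Lemma ret_cherry_degrees :
  [/\ indeg G px = 2, outdeg G px = 1, indeg G py = 1 & outdeg G py = 2].
Proof.
have [pxx pyy pypx] := ret_cherry_arcs; have clG := dnet_closed netG.
case: ret_cherry_shape => _ _ _ /reticP[pxG px2 _] _.
have py2 : (2 <= outdeg G py).
  apply: (@fcount_ge2 _ _ _ (py, y) (py, px)) => //=; apply/eqP => -[ypx].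
  by move: px2; rewrite -ypx; case: ret_cherry_shape => _ /leafP[_ -> _].
case: (binary_degrees netG binG pxG) px2 => -[-> ->] // _.
by case: (binary_degrees netG binG (clG _ pyy).1) py2 => -[-> ->].
Qed.

Lemma ret_cherry_other_parent : exists2 g, (g, px) \in arcs G & g != py.
Proof.
have [_ _ pypx] := ret_cherry_arcs; have [px2 _ _ _] := ret_cherry_degrees.
have /fcount_gt0P[[g px'] /=] : (0 < fcount (arcs G `\ (py, px)) (fun a => a.2 == px)).
  by have := fcountD1 (fun a => a.2 == px) pypx; rewrite -indegE px2 /= eqxx; lia.
rewrite !inE => /andP[gpy gpx] /eqP epx; rewrite epx in gpx gpy.
by exists g => //; apply: contra gpy => /eqP->.
Qed.

Variable g : nat.
Hypotheses (gpx : (g, px) \in arcs G) (g_py : g != py).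

Let G1 := DGraph (verts G) (arcs G `\ (py, px)).
Let G2 := suppress G1 px.

Lemma ret_cherry_deg1 z :
  indeg G1 z + (px == z) = indeg G z /\ outdeg G1 z + (py == z) = outdeg G z.
Proof. by have [_ _ pypx] := ret_cherry_arcs; exact: del_arc_deg. Qed.

Lemma ret_cherry_px_suppressible :
  [/\ indeg G1 px = 1, outdeg G1 px = 1, (g, px) \in arcs G1, (px, x) \in arcs G1
    & (g, x) \notin arcs G1].
Proof.
have [pxx _ pypx] := ret_cherry_arcs; have [px2 px1 _ _] := ret_cherry_degrees.
have [i o] := ret_cherry_deg1 px; have pypx' := arc_neq (dnet_acyclic netG) pypx.
split.
- by move: i; rewrite eqxx px2; lia.
- by move: o; rewrite (negbTE pypx') px1; lia.
- by rewrite !inE gpx andbT; apply: contra g_py => /eqP[->].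
- by rewrite !inE pxx andbT; apply: contra pypx' => /eqP[->].
rewrite !inE negb_and; apply/orP; right; apply: contra (arc_neq (dnet_acyclic netG) gpx) => gx.
by case: ret_cherry_shape => /leafP[_ x1 _] _ _ _ _; apply/eqP; case: (indeg1_arc x1 pxx gx erefl).
Qed.

Lemma ret_cherry_py_suppressible :
  [/\ indeg G2 py = 1, outdeg G2 py = 1, (q, py) \in arcs G2, (py, y) \in arcs G2
    & (q, y) \notin arcs G2].
Proof.
have [pxx pyy pypx] := ret_cherry_arcs; have [px2 _ py1 py2] := ret_cherry_degrees.
have [pxin1 pxout1 gpx1 pxx1 gx1] := ret_cherry_px_suppressible.
have acG := dnet_acyclic netG; have pypx' := arc_neq acG pypx.
case: ret_cherry_shape => /leafP[_ x1 x0] /leafP[_ y1 _] xy _ _.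
have ypx : y != px by apply/eqP => ypx; move: px2; rewrite -ypx y1.
have pyx : py != x by apply/eqP => pyx; move: py2; rewrite pyx x0.
have [i o] := ret_cherry_deg1 py.
have [-> ->] := suppress_deg pxin1 pxout1 gpx1 pxx1 gx1 pypx'.
rewrite !(in_suppress_arcs pxin1 pxout1 gpx1 pxx1) !inE !xpair_eqE !eqxx /=.
rewrite (negbTE pyx) (negbTE ypx) (negbTE pypx') [y == x]eq_sym (negbTE xy) !andbF /=.
move: i o; rewrite [px == py]eq_sym (negbTE pypx') eqxx py1 py2 addn0 => -> o.
have qpy := par_arc py1; split => //; first by lia.
apply: contra (arc_neq acG qpy) => qy.
by apply/eqP; case: (indeg1_arc y1 pyy qy erefl).
Qed.

Lemma ret_cherry_reduction : reduction G (reduce_pair G x y) [fset (py, px)].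
Proof.
have [pxx pyy pypx] := ret_cherry_arcs; have [px2 _ py1 _] := ret_cherry_degrees.
have [pxin1 pxout1 gpx1 pxx1 gx1] := ret_cherry_px_suppressible.
have [pyin1 pyout1 qpy2 pyy2 qy2] := ret_cherry_py_suppressible.
have [/leafP[_ x1 _] /leafP[_ y1 _] _ pxret _] := ret_cherry_shape.
have acG := dnet_acyclic netG; have clG := dnet_closed netG.
have not_cherry : ~~ cherryb G x y.
  by rewrite /cherryb -/px -/py [px == py]eq_sym (negbTE (arc_neq acG pypx)) !andbF.
rewrite /reduce_pair (negbTE not_cherry) ret -/px -/py -/G1 -/G2.
have inG3 z : (z \in verts (suppress G2 py)) = [&& z != py, z != px & z \in verts G].
  by rewrite (in_suppress_verts pyin1 pyout1 qpy2 pyy2) (in_suppress_verts pxin1 pxout1 gpx1 pxx1).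
have arcs2 a : a \in arcs G2 -> (a == (g, x)) || (a \in arcs G).
  rewrite (in_suppress_arcs pxin1 pxout1 gpx1 pxx1) !inE.
  by case/orP=> [->|/and3P[_ _ /andP[_ ->]]]; rewrite ?orbT.
have clG1 : arcs_closed G1 by move=> a; rewrite !inE => /andP[_ /clG].
split; first split.
- by apply/fsubsetP => z; rewrite inG3 => /and3P[].
- move=> z; rewrite inG3 => /and3P[zpy zpx _].
  have [-> ->] := suppress_deg pyin1 pyout1 qpy2 pyy2 qy2 zpy.
  have [-> ->] := suppress_deg pxin1 pxout1 gpx1 pxx1 gx1 zpx.
  by have [] := ret_cherry_deg1 z; rewrite !(eq_sym _ z) (negbTE zpy) (negbTE zpx) !addn0.
- exact/(suppress_closed pyin1 pyout1 qpy2 pyy2 qy2)/(suppress_closed pxin1 pxout1 gpx1 pxx1 gx1).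
- move=> v vG v0; rewrite inG3 vG andbT.
  by apply/andP; split; apply/eqP => ev; move: v0; rewrite ev ?py1 ?px2.
- move=> a; rewrite (in_suppress_arcs pyin1 pyout1 qpy2 pyy2) => /orP[/eqP->|/and3P[_ _ /arcs2]].
    right; split; first by rewrite indeg1_retic.
    exists py => /=; first by rewrite inG3 eqxx !inE xpair_eqE (negbTE (arc_neq acG pypx)) andbF.
    by rewrite par_arc.
  case/orP => [/eqP->|]; last by left.
  right; split; first by rewrite indeg1_retic.
  exists px => /=; last by rewrite gpx.
  by rewrite inG3 eqxx andbF !inE xpair_eqE (negbTE g_py).
- move=> a; rewrite inE => /eqP->; split; rewrite ?inG3 ?eqxx ?andbF //.
  by exists y; rewrite ?indeg1_retic.
- move=> v /reticP[vG v2 _]; rewrite inG3 vG andbT negb_and !negbK fcount1.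
  by case/orP => /eqP ev; rewrite ev ?eqxx //; move: v2; rewrite ev py1.
Qed.

End RetCherryReduction.

Lemma reduction_refl G : is_dnet G -> reduction G G fset0.
Proof.
move=> netG; split; first by split=> //; exact: dnet_closed.
- by left.
- by move=> a; rewrite inE.
- by move=> v /reticP[vG _ _]; rewrite vG.
Qed.

Lemma reduce_pair_reduction G x y : is_dnet G -> is_binary G ->
  exists F, reduction G (reduce_pair G x y) F.
Proof.
move=> netG binG; case: (boolP (cherryb G x y)) => [cherry|not_cherry].
  by exists fset0; exact: cherry_reduction.
case: (boolP (ret_cherryb G x y)) => [ret|not_ret].
  have [g gpx g_py] := ret_cherry_other_parent netG binG ret.
  by eexists; exact: ret_cherry_reduction gpx g_py.
by exists fset0; rewrite /reduce_pair (negbTE not_cherry) (negbTE not_ret); exact: reduction_refl.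
Qed.

Lemma reduce_seq_linking_arcs G S : is_dnet G -> is_binary G ->
  is_dnet (reduce_seq G S) -> no_retic (reduce_seq G S) -> exists E, linking_arcs G E.
Proof.
elim: S G => [|[x y] S IH] G netG binG /=.
  by move=> _ noret; exists fset0; split; rewrite ?fsub0set // => v; rewrite (negbTE (noret v)).
have [F redG] := reduce_pair_reduction x y netG binG.
have [netG' binG'] := reduction_network redG netG binG.
move=> /(IH _ netG' binG') /[apply] -[E linkE].
by exists (E `|` F); exact: (reduction_linking_arcs redG linkE).
Qed.

Lemma subdivision_trans A B C : subdivision A B -> subdivision B C -> subdivision A C.
Proof. by move=> AB; elim=> [//|S u v w _ IH uv w_new]; exact: subdiv_step IH uv w_new. Qed.

Definition forest F := [/\ arcs_closed F, acyclic F & forall v, (indeg F v <= 1)].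

Lemma suppress_forest F v : forest F -> v \in verts F -> indeg F v = 1 -> outdeg F v = 1 ->
  [/\ forest (suppress F v),
      (forall z, (z \in verts (suppress F v)) = (z != v) && (z \in verts F)),
      (forall z, z != v ->
         indeg (suppress F v) z = indeg F z /\ outdeg (suppress F v) z = outdeg F z) &
      subdivision (suppress F v) F].
Proof.
move=> [clF acF in_le1] vF v1 v1'.
have uv := par_arc v1; have vw := chld_arc v1'.
have uw : (par F v, chld F v) \notin arcs F.
  apply/negP => uw; have := in_le1 (chld F v); rewrite leqNgt indegE => /negP; apply.
  by apply: (fcount_ge2 uw _ vw) => //=; apply: contra (arc_neq acF uv) => /eqP[->].
have deg := suppress_deg v1 v1' uv vw uw.
split; [split | exact: in_suppress_verts v1 v1' uv vw | exact: deg |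
        exact: (suppress_subdivision v1 v1' uv vw uw vF)].
- exact: (suppress_closed v1 v1' uv vw uw clF).
- by move=> z /(reach_sub (suppress_reach v1 v1' uv vw)) /acF.
move=> z; case: (eqVneq z v) => [->|zv]; last by rewrite (deg z zv).1.
have := suppress_fcount v1 v1' uv vw uw (fun a => a.2 == v).
by rewrite -!indegE v1 /= eqxx; lia.
Qed.

Lemma foldl_suppress_forest F l : forest F -> uniq l ->
  (forall v, v \in l -> [&& v \in verts F, indeg F v == 1 & outdeg F v == 1]) ->
  [/\ forest (foldl suppress F l),
      (forall z, (z \in verts (foldl suppress F l)) = (z \notin l) && (z \in verts F)),
      (forall z, z \notin l -> indeg (foldl suppress F l) z = indeg F z /\
                               outdeg (foldl suppress F l) z = outdeg F z) &
      subdivision (foldl suppress F l) F].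
Proof.
elim: l F => [|v l IH] F forF /=; first by split=> //; exact: subdiv_refl.
case/andP=> vl uniq_l deg2.
have /and3P[vF /eqP v1 /eqP v1'] := deg2 v (mem_head v l).
have [forF' vertsF' degF' subF'] := suppress_forest forF vF v1 v1'.
have deg2' v' : v' \in l -> [&& v' \in verts (suppress F v),
    indeg (suppress F v) v' == 1 & outdeg (suppress F v) v' == 1].
  move=> v'l; have v'v : v' != v by apply: contraNneq vl => <-.
  have /and3P[v'F i o] := deg2 v' (mem_behead (s := v :: l) v'l).
  by rewrite vertsF' v'v v'F; have [-> ->] := degF' v' v'v; rewrite i o.
have [forT vertsT degT subT] := IH _ forF' uniq_l deg2'.
split=> //.
- by move=> z; rewrite vertsT vertsF' inE negb_or andbA [(z \notin l) && _]andbC.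
- by move=> z; rewrite inE negb_or => /andP[zv zl]; have [-> ->] := degT z zl; exact: degF'.
- exact: subdivision_trans subT subF'.
Qed.

(* Indices: in- and outdegree in N, in- and outdegree once the linking arcs are
   deleted, and number of linking arcs leaving the node. *)
Variant base_degree_spec : nat -> nat -> nat -> nat -> nat -> Prop :=
  | BaseRoot : base_degree_spec 0 1 0 1 0
  | BaseTreeNode : base_degree_spec 1 2 1 2 0
  | BaseLinkTail : base_degree_spec 1 2 1 1 1
  | BaseRetic : base_degree_spec 2 1 1 1 0
  | BaseLeaf : base_degree_spec 1 0 1 0 0.

Section BaseTree.
Variables (X : finType) (N : dgraph) (lbl : X -> nat) (E : {fset nat * nat}).
Hypotheses (bnet : binary_network N lbl) (linkE : linking_arcs N E).

Let netN : is_dnet N := bnet.1.1.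
Let binN : is_binary N := bnet.2.

Let base := DGraph (verts N) (arcs N `\` E).
Let link_out z := fcount E (fun a => a.1 == z).

Lemma base_deg z :
  indeg N z = indeg base z + is_reticb N z /\ outdeg N z = outdeg base z + link_out z.
Proof.
case: linkE => EN Eretic Ecount _; rewrite !indegE !outdegE !(fcount_split _ EN).
split=> //; congr (_ + _); case: (boolP (is_reticb N z)) => [/Ecount //|zret].
by apply: fcount_eq0 => a /Eretic; apply: contraL => /eqP->.
Qed.

Lemma base_degreesP z : z \in verts N ->
  base_degree_spec (indeg N z) (outdeg N z) (indeg base z) (outdeg base z) (link_out z).
Proof.
case: linkE => _ _ _ Eout zN; have [i o] := base_deg z.
have out_pos : link_out z = 0 \/ (0 < outdeg base z).
  case: (posnP (link_out z)) => [|/fcount_gt0P[a aE /eqP az]]; [by left | right].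
  have [w aw awE] := Eout a aE.
  by apply/fcount_gt0P; exists (a.1, w); rewrite /= ?az // !inE -az awE.
move: i o; rewrite /is_reticb zN.
case: (binary_degrees netN binN zN) => -[-> ->] /= i o.
- have [-> -> ->] : [/\ indeg base z = 0, outdeg base z = 1 & link_out z = 0] by split; lia.
  exact: BaseRoot.
- case: (posnP (link_out z)) => [e0|e_pos].
    have [-> -> ->] : [/\ indeg base z = 1, outdeg base z = 2 & link_out z = 0] by split; lia.
    exact: BaseTreeNode.
  have [-> -> ->] : [/\ indeg base z = 1, outdeg base z = 1 & link_out z = 1] by split; lia.
  exact: BaseLinkTail.
- have [-> -> ->] : [/\ indeg base z = 1, outdeg base z = 1 & link_out z = 0] by split; lia.
  exact: BaseRetic.
- have [-> -> ->] : [/\ indeg base z = 1, outdeg base z = 0 & link_out z = 0] by split; lia.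
  exact: BaseLeaf.
Qed.

Lemma base_linked z :
  [exists a : E, ((val a).1 == z) || ((val a).2 == z)] = (0 < link_out z) || is_reticb N z.
Proof.
case: linkE => _ Eretic Ecount _; apply/existsP/orP => [[[a aE] /= /orP[/eqP a1|/eqP a2]]|].
- by left; apply/fcount_gt0P; exists a; rewrite // a1.
- by right; rewrite -a2; exact: Eretic.
case=> [/fcount_gt0P[a aE a1]|/Ecount z1]; first by exists [` aE]; rewrite /= a1.
have /fcount_gt0P[a aE a2] : (0 < fcount E (fun a => a.2 == z)) by rewrite z1.
by exists [` aE]; rewrite /= a2 orbT.
Qed.

Lemma base_attachment z : z \in verts N ->
  ((indeg base z == 1) && (outdeg base z == 1)) =
  [exists a : E, ((val a).1 == z) || ((val a).2 == z)].
Proof. by move=> zN; rewrite base_linked /is_reticb zN; case: (base_degreesP zN). Qed.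

Lemma base_forest : forest base.
Proof.
have clN := dnet_closed netN.
have baseN a : a \in arcs base -> a \in arcs N by rewrite inE => /andP[].
have baseclosed : arcs_closed base by move=> a /baseN /clN.
split=> //.
- have basereach a : a \in arcs base -> reach N a.1 a.2 by case: a => a1 a2 /baseN /reach_arc.
  by move=> v /(reach_sub basereach) /(dnet_acyclic netN).
move=> z; case: (boolP (z \in verts N)) => [zN|zN]; first by case: (base_degreesP zN).
by rewrite (closed_deg0 baseclosed zN).1.
Qed.

Let attach := [fset z in verts N | (indeg base z == 1) && (outdeg base z == 1)].
Let T := foldl suppress base (enum_fset attach).

Lemma base_tree_spec :
  [/\ forest T, (forall z, (z \in verts T) = (z \in verts N) && (z \notin attach)),
      (forall z, z \notin attach -> indeg T z = indeg base z /\ outdeg T z = outdeg base z) &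
      subdivision T base].
Proof.
have attach_deg v : v \in enum_fset attach ->
    [&& v \in verts base, indeg base v == 1 & outdeg base v == 1].
  by rewrite -[_ \in enum_fset _]/(v \in attach) !inE.
have [forT vertsT degT subT] := foldl_suppress_forest base_forest (fset_uniq attach) attach_deg.
by split=> // z; rewrite vertsT andbC.
Qed.

Lemma base_tree_deg z : z \in verts T -> indeg T z = indeg N z /\ outdeg T z = outdeg N z.
Proof.
have [_ vertsT degT _] := base_tree_spec.
rewrite vertsT => /andP[zN za]; have [-> ->] := degT z za.
by move: za; rewrite !inE zN /=; case: (base_degreesP zN).
Qed.

Lemma base_tree_restriction : degree_restriction N T.
Proof.
have [[clT _ _] vertsT _ _] := base_tree_spec.
split=> //; first by apply/fsubsetP => z; rewrite vertsT => /andP[].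
- exact: base_tree_deg.
move=> v vN; rewrite vertsT vN !inE vN /=.
by case: (base_degreesP vN).
Qed.

Lemma base_tree_binary : binary_tree T lbl.
Proof.
have [[_ acT in_le1] vertsT _ _] := base_tree_spec.
have resT := base_tree_restriction; have types := restriction_types resT.
have [netT binT] := restriction_network resT netN binN acT.
case: bnet => -[_ [inj_lbl [leaf_lbl lbl_onto]]] _.
split; last by move=> v; rewrite /is_reticb ltnNge in_le1 andbF.
split=> //; split=> //; split=> //; split=> [x|v leafv].
  have /leafP[xN _ x0] := leaf_lbl x.
  have xT : lbl x \in verts T by rewrite vertsT xN !inE xN /=; move: x0; case: (base_degreesP xN).
  by have [_ _ _ ->] := types _ xT.
by apply: lbl_onto; have /leafP[vT _ _] := leafv; have [_ _ _ <-] := types _ vT.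
Qed.

Lemma linking_arcs_tree_based : tree_based N lbl.
Proof.
have [_ vertsT _ subT] := base_tree_spec.
have clN := dnet_closed netN; have [EN _ _ _] := linkE.
have attachE z : (z \in verts base `\` verts T) =
    (z \in verts N) && [exists a : E, ((val a).1 == z) || ((val a).2 == z)].
  rewrite inE vertsT /= andbC; case: (boolP (z \in verts N)) => //= zN.
  by rewrite !inE zN negbK base_attachment.
have H_N : DGraph (verts base) (arcs base `|` E) = N.
  rewrite [RHS]dgraph_eta; congr DGraph; apply/fsetP => a; rewrite !inE.
  by case: (boolP (a \in E)) => [/(fsubsetP EN) ->|]; rewrite ?orbT ?orbF.
exists T, lbl; split; first exact: base_tree_binary.
exists base, E; split=> //; split.
  move=> a aE; have [a1N a2N] := clN _ (fsubsetP EN a aE).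
  rewrite !attachE a1N a2N !inE aE /=.
  by split; [|split=> //]; apply/existsP; exists [` aE]; rewrite /= eqxx ?orbT.
cbv zeta; rewrite H_N; split.
  move=> v; case: (boolP (v \in verts N)) => [vN|vN].
    by case: (binary_degrees netN binN vN) => -[-> ->].
  by have [-> ->] := closed_deg0 clN vN.
split; first exact: dnet_acyclic netN.
rewrite (_ : [fset v | v in _ & _] = fset0); last first.
  by apply/fsetP => z; rewrite !inE -in_fsetD attachE; case: (_ \in _); case: [exists _, _].
by exists id => /=; rewrite imfset_id; split => // u v.
Qed.

End BaseTree.

Theorem mainTheorem6 (X : finType) (N : dgraph) (lbl : X -> nat) :
  binary_network N lbl -> orchard N lbl -> tree_based N lbl.
Proof.
move=> bnet [S [netS [noretS _]]]; have [[netN _] binN] := bnet.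
have [E linkE] := reduce_seq_linking_arcs netN binN netS noretS.
exact: linking_arcs_tree_based bnet linkE.
Qed.
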